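(* Let $q>1$, $0\le M_0<M$, let $u$ be a sufficiently smooth $L$-periodic solution of $u_t=-\alpha uu_x+\beta u_{xxx}$ on $[0,T]\times\mathbb{R}$, $r>\sup_{t,x}|u(t,x)|$. Assume $u^{(0)}_k=u(0,k\Delta x)$, that $u^{(0)},\dots,u^{(M_0+1)}$ are obtained successively as solutions of the scheme, that $\|u^{(m)}\|_\infty\le r$ for $m\le M_0$, that $\Delta t<\min\{\varepsilon_1(q,r,\Delta x),\varepsilon_2(q,r,\Delta x)\}$, and that $\|u^{(M_0+1)}\|_\infty\le qr$. For $\theta>0$ set $\mathcal{E}'^{(m)}=\theta\|e^{(m)}\|^2+\|\delta^+_xe^{(m)}\|^2+A^{(m)}$ with $A^{(m)}=\frac{\alpha}{3\beta}\sum_{k=1}^K(e^{(m)}_k)^3\Delta x$. If $\theta\ge 1+\frac{2qr|\alpha|}{3|\beta|}$, then $0\le\|e^{(m)}\|_{H^1}^2\le\mathcal{E}'^{(m)}$ for $m=0,\dots,M_0+1$.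
   Context: $L>0$, $K\in\mathbb{N}$, $\Delta x=L/K$; $T>0$, $M\in\mathbb{N}$, $\Delta t=T/M$; $\alpha\in\mathbb{R}$, $\beta\ne0$. Grid functions are $K$-periodic real sequences. $\delta^+_x v_k=(v_{k+1}-v_k)/\Delta x$, $\delta^{\langle 1\rangle}_x v_k = (v_{k+1}-v_{k-1})/(2\Delta x)$, $\delta^{\langle 2\rangle}_x v_k = (v_{k+1}-2v_k+v_{k-1})/(\Delta x)^2$, $\|v\|=(\sum_{k=1}^K v_k^2\Delta x)^{1/2}$, $\|v\|_\infty=\max_k|v_k|$, $\|v\|_{H^1}=(\|v\|^2+\|\delta^+_xv\|^2)^{1/2}$; $\delta^+_t v^{(n)}=(v^{(n+1)}-v^{(n)})/\Delta t$, $\mu^+_t v^{(n)}=(v^{(n+1)}+v^{(n)})/2$. The scheme: $u^{(n+1)}$ solves it at step $n$ if $\delta^+_t u^{(n)}_k = -\frac{\alpha}{6}\delta^{\langle 1\rangle}_x\{(u^{(n+1)}_k)^2 + u^{(n+1)}_k u^{(n)}_k + (u^{(n)}_k)^2\} + \beta\delta^{\langle 1\rangle}_x\delta^{\langle 2\rangle}_x \mu^+_t u^{(n)}_k$ for all $k$. $\varepsilon_1(q,r,\Delta x) = (q-1)(\Delta x)^3[\frac{|\alpha|}{6}(\Delta x)^2(q^2+q+1)r + \frac{3}{2}|\beta|(q+1)]^{-1}$, $\varepsilon_2(q,r,\Delta x) = (\Delta x)^3[\frac{|\alpha|}{6}(\Delta x)^2(2q+1)r + \frac{3}{2}|\beta|]^{-1}$.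 $\tilde u^{(m)}_k=u(m\Delta t,k\Delta x)$, $e^{(m)}=u^{(m)}-\tilde u^{(m)}$. *)

From Stdlib Require Import Reals Lra Lia ZArith List.
From Coquelicot Require Import Coquelicot.
Open Scope R_scope.

Definition grid := Z -> R.

Definition periodic_grid (K : nat) (v : grid) : Prop :=
  forall k : Z, v (k + Z.of_nat K)%Z = v k.

Definition gsum (K : nat) (f : Z -> R) : R :=
  fold_right Rplus 0 (map (fun i => f (Z.of_nat i)) (seq 1 K)).

Definition dxp (dx : R) (v : grid) : grid := fun k => (v (k + 1)%Z - v k) / dx.
Definition dx1 (dx : R) (v : grid) : grid := fun k => (v (k + 1)%Z - v (k - 1)%Z) / (2 * dx).
Definition dx2 (dx : R) (v : grid) : grid :=
  fun k => (v (k + 1)%Z - 2 * v k + v (k - 1)%Z) / (dx ^ 2).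

Definition gnorm (K : nat) (dx : R) (v : grid) : R := sqrt (gsum K (fun k => v k ^ 2 * dx)).
Definition gnorm_inf (K : nat) (v : grid) : R :=
  fold_right Rmax 0 (map (fun i => Rabs (v (Z.of_nat i))) (seq 1 K)).
Definition gnorm_H1 (K : nat) (dx : R) (v : grid) : R :=
  sqrt (gnorm K dx v ^ 2 + gnorm K dx (dxp dx v) ^ 2).

(* w = u^(n+1) solves the scheme at step n, given v = u^(n) *)
Definition scheme_step (alpha beta dx dt : R) (v w : grid) : Prop :=
  forall k : Z,
    (w k - v k) / dt =
      - (alpha / 6) * dx1 dx (fun j => w j ^ 2 + w j * v j + v j ^ 2) k
      + beta * dx1 dx (dx2 dx (fun j => (w j + v j) / 2)) k.

Definition scheme_eps1 (alpha beta q r dx : R) : R :=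
  (q - 1) * dx ^ 3 /
    (Rabs alpha / 6 * dx ^ 2 * (q ^ 2 + q + 1) * r + 3 / 2 * Rabs beta * (q + 1)).
Definition scheme_eps2 (alpha beta q r dx : R) : R :=
  dx ^ 3 / (Rabs alpha / 6 * dx ^ 2 * (2 * q + 1) * r + 3 / 2 * Rabs beta).

Definition kdv_solution (alpha beta L T : R) (u : R -> R -> R) : Prop :=
  (forall t x, 0 <= t <= T -> u t (x + L) = u t x) /\
  (forall t x, 0 <= t <= T -> continuous (fun p : R * R => u (fst p) (snd p)) (t, x)) /\
  (forall t x, 0 < t < T ->
     ex_derive (fun s => u s x) t /\
     ex_derive_n (u t) 3 x /\
     Derive (fun s => u s x) t =
       - alpha * u t x * Derive (u t) x + beta * Derive_n (u t) 3 x).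

Definition energy' (K : nat) (dx alpha beta theta : R) (e : grid) : R :=
  theta * gnorm K dx e ^ 2 + gnorm K dx (dxp dx e) ^ 2
  + alpha / (3 * beta) * gsum K (fun k => e k ^ 3 * dx).

(* Every value of U^(m) is bounded by q r and every value of u by s < r <= q r,
   so each error value satisfies |e_k| <= 2 q r.  Hence the cubic term obeys
   |A^(m)| <= (2 q r |alpha| / (3 |beta|)) ||e||^2 <= (theta - 1) ||e||^2, and
   E'^(m) >= ||e||^2 + ||delta_x^+ e||^2 = ||e||_{H^1}^2.  Only these sup-norm
   bounds enter. *)
From Stdlib Require Import Reals ZArith List Lra Lia.
From Coquelicot Require Import Coquelicot.
Open Scope R_scope.

Lemma gsum_scal (K : nat) (c : R) (f : Z -> R) :
  gsum K (fun k => c * f k) = c * gsum K f.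
Proof.
  unfold gsum. induction (seq 1 K) as [|i l IH]; simpl.
  - ring.
  - rewrite IH; ring.
Qed.

Lemma gsum_abs_le (K : nat) (f g : Z -> R) :
  (forall i, (1 <= i <= K)%nat -> Rabs (f (Z.of_nat i)) <= g (Z.of_nat i)) ->
  Rabs (gsum K f) <= gsum K g.
Proof.
  intros Hfg.
  assert (Hl : forall i, In i (seq 1 K) -> Rabs (f (Z.of_nat i)) <= g (Z.of_nat i)).
  { intros i Hi; apply in_seq in Hi; apply Hfg; lia. }
  unfold gsum; revert Hl; generalize (seq 1 K) as l.
  induction l as [|i l IH]; simpl; intros Hl.
  - rewrite Rabs_R0; lra.
  - eapply Rle_trans; [apply Rabs_triang|].
    apply Rplus_le_compat; auto.
Qed.

Lemma gsum_nonneg (K : nat) (g : Z -> R) :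
  (forall i, (1 <= i <= K)%nat -> 0 <= g (Z.of_nat i)) -> 0 <= gsum K g.
Proof.
  intros Hg. eapply Rle_trans; [apply Rabs_pos|].
  apply gsum_abs_le; intros i Hi.
  rewrite Rabs_pos_eq; auto using Rle_refl.
Qed.

Lemma gnorm_inf_ge (K : nat) (v : grid) (i : nat) :
  (1 <= i <= K)%nat -> Rabs (v (Z.of_nat i)) <= gnorm_inf K v.
Proof.
  intros Hi.
  assert (Hin : In i (seq 1 K)) by (apply in_seq; lia).
  unfold gnorm_inf; revert Hin; generalize (seq 1 K) as l.
  induction l as [|j l IH]; simpl; intros Hin; [contradiction|].
  destruct Hin as [<-|Hin]; [apply Rmax_l|].
  eapply Rle_trans; [apply IH, Hin|apply Rmax_r].
Qed.

Lemma gnorm_sqr (K : nat) (dx : R) (v : grid) :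
  0 <= dx -> gnorm K dx v ^ 2 = gsum K (fun k => v k ^ 2 * dx).
Proof.
  intros Hdx. apply pow2_sqrt, gsum_nonneg; intros.
  apply Rmult_le_pos; auto using pow2_ge_0.
Qed.

Lemma gnorm_H1_sqr (K : nat) (dx : R) (v : grid) :
  gnorm_H1 K dx v ^ 2 = gnorm K dx v ^ 2 + gnorm K dx (dxp dx v) ^ 2.
Proof.
  apply pow2_sqrt.
  pose proof (pow2_ge_0 (gnorm K dx v)); pose proof (pow2_ge_0 (gnorm K dx (dxp dx v))).
  lra.
Qed.

Lemma gsum_cube_abs_le (K : nat) (dx c : R) (v : grid) :
  0 <= dx -> (forall i, (1 <= i <= K)%nat -> Rabs (v (Z.of_nat i)) <= c) ->
  Rabs (gsum K (fun k => v k ^ 3 * dx)) <= c * gnorm K dx v ^ 2.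
Proof.
  intros Hdx Hv.
  rewrite gnorm_sqr, <- gsum_scal by exact Hdx.
  apply gsum_abs_le; intros i Hi.
  assert (Hsq : 0 <= v (Z.of_nat i) ^ 2 * dx) by (apply Rmult_le_pos; auto using pow2_ge_0).
  replace (v (Z.of_nat i) ^ 3 * dx) with (v (Z.of_nat i) * (v (Z.of_nat i) ^ 2 * dx)) by ring.
  rewrite Rabs_mult, (Rabs_pos_eq (_ * dx)) by exact Hsq.
  apply Rmult_le_compat_r; auto.
Qed.

Lemma cubic_energy_abs_le (K : nat) (dx alpha beta c : R) (v : grid) :
  0 <= dx -> beta <> 0 ->
  (forall i, (1 <= i <= K)%nat -> Rabs (v (Z.of_nat i)) <= c) ->
  Rabs (alpha / (3 * beta) * gsum K (fun k => v k ^ 3 * dx))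
    <= c * Rabs alpha / (3 * Rabs beta) * gnorm K dx v ^ 2.
Proof.
  intros Hdx Hb Hv.
  pose proof (Rabs_pos_lt beta Hb).
  assert (Hcoef : Rabs (alpha / (3 * beta)) = Rabs alpha / (3 * Rabs beta)).
  { unfold Rdiv. rewrite Rabs_mult, Rabs_inv, Rabs_mult, (Rabs_pos_eq 3) by lra.
    reflexivity. }
  rewrite Rabs_mult, Hcoef.
  replace (c * Rabs alpha / (3 * Rabs beta) * gnorm K dx v ^ 2)
    with (Rabs alpha / (3 * Rabs beta) * (c * gnorm K dx v ^ 2)) by (field; lra).
  apply Rmult_le_compat_l.
  - apply Rmult_le_pos; [apply Rabs_pos|apply Rlt_le, Rinv_0_lt_compat; lra].
  - apply gsum_cube_abs_le; auto.
Qed.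

Lemma gnorm_H1_sqr_le_energy' (K : nat) (dx alpha beta theta c : R) (v : grid) :
  0 <= dx -> beta <> 0 ->
  (forall i, (1 <= i <= K)%nat -> Rabs (v (Z.of_nat i)) <= c) ->
  theta >= 1 + c * Rabs alpha / (3 * Rabs beta) ->
  gnorm_H1 K dx v ^ 2 <= energy' K dx alpha beta theta v.
Proof.
  intros Hdx Hb Hv Htheta.
  pose proof (cubic_energy_abs_le K dx alpha beta c v Hdx Hb Hv) as Hcubic.
  pose proof (Rle_abs (- (alpha / (3 * beta) * gsum K (fun k => v k ^ 3 * dx)))) as Hneg.
  rewrite Rabs_Ropp in Hneg.
  pose proof (pow2_ge_0 (gnorm K dx v)).
  rewrite gnorm_H1_sqr; unfold energy'.
  nra.
Qed.

Lemma time_grid_in_range (T : R) (m M : nat) :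
  0 < T -> (m <= M)%nat -> (0 < M)%nat -> 0 <= INR m * (T / INR M) <= T.
Proof.
  intros HT HmM HM.
  assert (0 < INR M) by (apply lt_0_INR; lia).
  assert (INR m <= INR M) by (apply le_INR; lia).
  pose proof (pos_INR m).
  assert (0 < T / INR M) by (apply Rdiv_lt_0_compat; lra).
  assert (T = INR M * (T / INR M)) by (field; lra).
  split; nra.
Qed.

Theorem lemma3p6
  (L T alpha beta : R) (K M M0 : nat)
  (u : R -> R -> R) (U : nat -> Z -> R) (q r theta : R) :
  0 < L -> (0 < K)%nat -> 0 < T -> beta <> 0 ->
  1 < q -> (M0 < M)%nat ->
  kdv_solution alpha beta L T u ->
  (exists s, s < r /\ forall t x, 0 <= t <= T -> Rabs (u t x) <= s) ->
  let dx := L / INR K in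
  let dt := T / INR M in
  (forall m, (m <= M0 + 1)%nat -> periodic_grid K (U m)) ->
  (forall k : Z, U 0%nat k = u 0 (IZR k * dx)) ->
  (forall n, (n <= M0)%nat -> scheme_step alpha beta dx dt (U n) (U (S n))) ->
  (forall m, (m <= M0)%nat -> gnorm_inf K (U m) <= r) ->
  dt < Rmin (scheme_eps1 alpha beta q r dx) (scheme_eps2 alpha beta q r dx) ->
  gnorm_inf K (U (S M0)) <= q * r ->
  0 < theta ->
  theta >= 1 + 2 * q * r * Rabs alpha / (3 * Rabs beta) ->
  forall m, (m <= M0 + 1)%nat ->
    let e : grid := fun k => U m k - u (INR m * dt) (IZR k * dx) in
    0 <= gnorm_H1 K dx e ^ 2 <= energy' K dx alpha beta theta e.
Proof.
  intros HL HK HT Hb Hq HM _ [s [Hsr Hu]] dx dt _ _ _ HUr _ HUqr _ Htheta m Hm e.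
  assert (Hdx : 0 <= dx) by (apply Rlt_le, Rdiv_lt_0_compat; [lra|apply lt_0_INR; lia]).
  assert (Hr : 0 <= r).
  { pose proof (Hu 0 0 ltac:(lra)); pose proof (Rabs_pos (u 0 0)); lra. }
  assert (HUm : gnorm_inf K (U m) <= q * r).
  { destruct (Nat.le_gt_cases m M0) as [Hle|Hgt].
    - pose proof (HUr m Hle); nra.
    - replace m with (S M0) by lia; exact HUqr. }
  assert (He : forall i, (1 <= i <= K)%nat -> Rabs (e (Z.of_nat i)) <= 2 * q * r).
  { intros i Hi.
    pose proof (Rle_trans _ _ _ (gnorm_inf_ge K (U m) i Hi) HUm) as HUi.
    pose proof (Hu (INR m * dt) (IZR (Z.of_nat i) * dx)
                  (time_grid_in_range T m M HT ltac:(lia) ltac:(lia))) as Hui.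
    unfold e, Rminus; eapply Rle_trans; [apply Rabs_triang|].
    rewrite Rabs_Ropp; nra. }
  split; [apply pow2_ge_0|].
  exact (gnorm_H1_sqr_le_energy' K dx alpha beta theta (2 * q * r) e Hdx Hb He Htheta).
Qed.
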